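(* Let $N\ge 3$ and consider a planar ''wheel'' framework in $\mathbb{R}^2$: a hub vertex at $\mathbf{U}_0$ and spoke vertices at $\mathbf{U}_1,\dots,\mathbf{U}_N$ arranged in counterclockwise order around $\mathbf{U}_0$, with all indices taken modulo $N$. Its edges are the $N$ spokes $(0,i)$ and the $N$ rim edges $(i,i+1)$, $i=1,\dots,N$. Let $L_i=|\mathbf{U}_i-\mathbf{U}_0|$, $\Delta L_{i,i+1}=|\mathbf{U}_{i+1}-\mathbf{U}_i|$, and let $\alpha_{i,i+1}\in(0,\pi)$ be the planar angle at $\mathbf{U}_0$ between spokes $i$ and $i+1$, with $\sum_{i=1}^N\alpha_{i,i+1}=2\pi$. Define $$\sigma_{i,i+1}=-\csc\alpha_{i,i+1}\,\frac{\Delta L_{i,i+1}}{L_iL_{i+1}}$$ on rim edge $(i,i+1)$, and $$\sigma_i=\frac{\csc\alpha_{i,i+1}}{L_{i+1}}+\frac{\csc\alpha_{i-1,i}}{L_{i-1}}-\frac{\cot\alpha_{i,i+1}+\cot\alpha_{i-1,i}}{L_i}$$ on spoke $(0,i)$. Then this assignment $\boldsymbol{\sigma}$ is a self stress of the framework. That is, for every vertex $n\in\{0,1,\dots,N\}$, $$\sum_{m:\,(n,m)\text{ an edge}}\sigma_{(n,m)}\,\frac{\mathbf{U}_n-\mathbf{U}_m}{|\mathbf{U}_n-\mathbf{U}_m|}=\mathbf{0}.$$ Equivalently, $\boldsymbol{\sigma}^T\mathbf{C}=\mathbf{0}^T$, where $\mathbf{C}$ is the compatibility matrix whose row for edge $(n,m)$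 sends the in-plane displacements $(\mathbf{u}_1,\mathbf{u}_2,\dots)$ to $\frac{\mathbf{U}_n-\mathbf{U}_m}{|\mathbf{U}_n-\mathbf{U}_m|}\cdot(\mathbf{u}_n-\mathbf{u}_m)$.
   Context: A self stress of a bar framework is an assignment of a real number $\sigma_e$ to each edge $e$ such that force balance holds at every vertex, with the forces directed along unit edge vectors as written in the claim. The wheel arises as the star of an internal vertex of a planar triangulated crease pattern: the faces are the triangles $(\mathbf{U}_0,\mathbf{U}_i,\mathbf{U}_{i+1})$, which is why each angle lies in $(0,\pi)$. *)

From HB Require Import structures.
From mathcomp Require Import all_boot all_order all_algebra.
From mathcomp Require Import reals trigo.
Set Implicit Arguments. Unset Strict Implicit. Unset Printing Implicit Defensive.
Import Order.TTheory GRing.Theory Num.Theory.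
Local Open Scope ring_scope.

Section Defs.
Variable R : realType.

Definition vx (v : 'rV[R]_2) : R := v ord0 ord0.
Definition vy (v : 'rV[R]_2) : R := v ord0 (@Ordinal 2 1 isT).
Definition dot (u v : 'rV[R]_2) : R := vx u * vx v + vy u * vy v.
Definition cross (u v : 'rV[R]_2) : R := vx u * vy v - vy u * vx v.
Definition vnorm (v : 'rV[R]_2) : R := Num.sqrt (dot v v).

Definition unitdir (a b : 'rV[R]_2) : 'rV[R]_2 := (vnorm (a - b))^-1 *: (a - b).

Definition csc (x : R) : R := (sin x)^-1.
Definition cot (x : R) : R := cos x / sin x.

Definition is_self_stress (V : finType) (p : V -> 'rV[R]_2) (E : rel V)
    (s : V -> V -> R) : Prop :=
  (forall n m, E n m -> s n m = s m n) /\
  forall n : V, \sum_(m : V | E n m) s n m *: unitdir (p n) (p m) = 0.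

(* The wheel on N spokes.  Vertex None = hub U_0, vertex Some i (i : 'I_N)
   = spoke vertex U_{i+1} of the paper; indices mod N via ordS / ord_pred. *)
Definition wheel_pos (N : nat) (U0 : 'rV[R]_2) (U : 'I_N -> 'rV[R]_2)
    (v : option 'I_N) : 'rV[R]_2 :=
  match v with None => U0 | Some i => U i end.

Definition wheel_edge (N : nat) : rel (option 'I_N) := fun a b =>
  match a, b with
  | None, Some _ => true
  | Some _, None => true
  | Some i, Some j => (j == ordS i) || (i == ordS j)
  | None, None => false
  end.

Definition spokeL N (U0 : 'rV[R]_2) (U : 'I_N -> 'rV[R]_2) (i : 'I_N) : R :=
  vnorm (U i - U0).
Definition rimL N (U : 'I_N -> 'rV[R]_2) (i : 'I_N) : R :=
  vnorm (U (ordS i) - U i).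

(* sigma_{i,i+1} on rim edge (i, i+1); alpha i = alpha_{i,i+1} *)
Definition sigma_rim N (U0 : 'rV[R]_2) (U : 'I_N -> 'rV[R]_2) (alpha : 'I_N -> R)
    (i : 'I_N) : R :=
  - csc (alpha i) * rimL U i / (spokeL U0 U i * spokeL U0 U (ordS i)).

Definition sigma_spoke N (U0 : 'rV[R]_2) (U : 'I_N -> 'rV[R]_2) (alpha : 'I_N -> R)
    (i : 'I_N) : R :=
  csc (alpha i) / spokeL U0 U (ordS i)
  + csc (alpha (ord_pred i)) / spokeL U0 U (ord_pred i)
  - (cot (alpha i) + cot (alpha (ord_pred i))) / spokeL U0 U i.

Definition wheel_stress N (U0 : 'rV[R]_2) (U : 'I_N -> 'rV[R]_2) (alpha : 'I_N -> R)
    (a b : option 'I_N) : R :=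
  match a, b with
  | None, Some i => sigma_spoke U0 U alpha i
  | Some i, None => sigma_spoke U0 U alpha i
  | Some i, Some j =>
      if j == ordS i then sigma_rim U0 U alpha i
      else if i == ordS j then sigma_rim U0 U alpha j
      else 0
  | None, None => 0
  end.

End Defs.

From HB Require Import structures.
From mathcomp Require Import all_boot all_order all_algebra.
From mathcomp Require Import reals trigo.
From mathcomp Require Import ring.
Import Order.TTheory GRing.Theory Num.Theory.
Local Open Scope ring_scope.

(* Let e_i be the unit vector along spoke i and J the quarter turn.  The angle
   hypotheses say e_(i+1) = cos a_i e_i + sin a_i J e_i, hence
     csc a_i e_(i+1) - cot a_i e_i = J e_i
                                   = cot a_(i-1) e_i - csc a_(i-1) e_(i-1),
   so the vector turn_i := csc a_i e_(i+1) + csc a_(i-1) e_(i-1)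
   - (cot a_i + cot a_(i-1)) e_i vanishes.  The net force at spoke vertex i is
   turn_i / L_i, and after shifting the indices of the csc-terms the net force
   at the hub is - sum_i turn_i / L_i. *)

Lemma ordSS_neq {n} (i : 'I_n) : (2 < n)%N -> ordS (ordS i) != i.
Proof.
move=> n_gt2; apply/eqP => /(congr1 val) /=.
rewrite -addn1 modnDml addn1 -addn2 -[X in _ = X -> _](modn_small (ltn_ord i)).
move=> /eqP; rewrite -{2}[i : nat]addn0 eqn_modDl !modn_small //.
exact: ltn_trans n_gt2.
Qed.

Lemma ord_pred_neq_ordS {n} (i : 'I_n) : (2 < n)%N -> ord_pred i != ordS i.
Proof. by move=> /(ordSS_neq (ord_pred i)); rewrite ord_predK eq_sym. Qed.

Lemma big_Some {V : nmodType} {T : finType} (t0 : T) (P : pred (option T))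
    (F : option T -> V) :
  P None = false -> \sum_(m | P m) F m = \sum_(t | P (Some t)) F (Some t).
Proof.
move=> P_None; rewrite (reindex Some) //.
by exists (odflt t0) => [t|[t|]] //; rewrite inE P_None.
Qed.

Section PlaneVectors.
Context {R : realType}.
Implicit Types (u v a b o : 'rV[R]_2) (c s : R).

Definition perp v : 'rV[R]_2 := \row_(j < 2) if j == ord0 then - vy v else vx v.

Lemma vxD u v : vx (u + v) = vx u + vx v. Proof. by rewrite /vx mxE. Qed.
Lemma vyD u v : vy (u + v) = vy u + vy v. Proof. by rewrite /vy mxE. Qed.
Lemma vxN v : vx (- v) = - vx v. Proof. by rewrite /vx mxE. Qed.
Lemma vyN v : vy (- v) = - vy v. Proof. by rewrite /vy mxE. Qed.
Lemma vxZ c v : vx (c *: v) = c * vx v. Proof. by rewrite /vx mxE. Qed.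
Lemma vyZ c v : vy (c *: v) = c * vy v. Proof. by rewrite /vy mxE. Qed.
Lemma vx_perp v : vx (perp v) = - vy v. Proof. by rewrite /vx mxE. Qed.
Lemma vy_perp v : vy (perp v) = vx v. Proof. by rewrite /vy mxE. Qed.

Lemma rv2P u v : vx u = vx v -> vy u = vy v -> u = v.
Proof.
move=> ex ey; apply/rowP => -[[|[|k]] lt_k2] //.
- by rewrite [Ordinal _](_ : _ = ord0) //; apply: val_inj.
- by rewrite [Ordinal _](_ : _ = Ordinal (isT : (1 < 2)%N)) //; apply: val_inj.
Qed.

Lemma dotC u v : dot u v = dot v u.
Proof. by rewrite /dot mulrC [vy u * _]mulrC. Qed.

Lemma crossC u v : cross u v = - cross v u.
Proof. by rewrite /cross opprB mulrC [vy u * _]mulrC. Qed.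

Lemma dot_ge0 v : 0 <= dot v v.
Proof. by rewrite /dot -!expr2 addr_ge0 ?sqr_ge0. Qed.

Lemma vnorm_sqr v : vnorm v ^+ 2 = dot v v.
Proof. by rewrite /vnorm sqr_sqrtr ?dot_ge0. Qed.

Lemma vnormN v : vnorm (- v) = vnorm v.
Proof. by rewrite /vnorm /dot !(vxN, vyN) !mulrNN. Qed.

Lemma vnorm_gt0 v : v != 0 -> 0 < vnorm v.
Proof.
move=> v_neq0; rewrite /vnorm sqrtr_gt0 lt_neqAle dot_ge0 andbT eq_sym.
apply: contra v_neq0; rewrite /dot -!expr2 paddr_eq0 ?sqr_ge0 // !sqrf_eq0.
by case/andP => /eqP vx0 /eqP vy0; apply/eqP/rv2P; rewrite ?vx0 ?vy0 /vx /vy !mxE.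
Qed.

Lemma unitdirC a b : unitdir a b = - unitdir b a.
Proof. by rewrite /unitdir -scalerN opprB -vnormN opprB. Qed.

Lemma vnormZ_unitdir a b : vnorm (a - b) *: unitdir a b = a - b.
Proof.
rewrite /unitdir; have [->|ab_neq0] := eqVneq (a - b) 0.
  by rewrite !scaler0.
by rewrite scalerA mulfV ?scale1r // gt_eqF ?vnorm_gt0.
Qed.

Lemma dot_cross_decomposition u v :
  dot u u *: v = dot u v *: u + cross u v *: perp u.
Proof.
by apply: rv2P; rewrite !(vxD, vyD, vxZ, vyZ, vx_perp, vy_perp) /dot /cross; ring.
Qed.

Lemma perpZ c v : perp (c *: v) = c *: perp v.
Proof. by apply: rv2P; rewrite !(vxZ, vyZ, vx_perp, vy_perp) ?mulrN. Qed.

Lemma unitdir_rotate o a b c s : a != o -> b != o ->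
  c * (vnorm (a - o) * vnorm (b - o)) = dot (a - o) (b - o) ->
  s * (vnorm (a - o) * vnorm (b - o)) = cross (a - o) (b - o) ->
  unitdir b o = c *: unitdir a o + s *: perp (unitdir a o).
Proof.
rewrite /unitdir perpZ -!(subr_eq0 _ o); move: (a - o) (b - o) => p q.
move=> /vnorm_gt0/gt_eqF p_neq0 /vnorm_gt0/gt_eqF q_neq0 cos_pq sin_pq.
have p2_neq0 : vnorm p ^+ 2 != 0 by rewrite expf_eq0 p_neq0 andbF.
have decomp : vnorm p ^+ 2 *: q = (vnorm p * vnorm q) *: (c *: p + s *: perp p).
  by rewrite vnorm_sqr dot_cross_decomposition -cos_pq -sin_pq [RHS]scalerDr
    !scalerA [_ * c]mulrC [_ * s]mulrC.
have [qx qy] := (congr1 (@vx R) decomp, congr1 (@vy R) decomp).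
rewrite !(vxD, vyD, vxZ, vyZ, vx_perp, vy_perp) in qx qy.
apply: rv2P; rewrite !(vxD, vyD, vxZ, vyZ, vx_perp, vy_perp).
- by rewrite -[vx q](mulKf p2_neq0) qx; field; rewrite p_neq0 q_neq0.
- by rewrite -[vy q](mulKf p2_neq0) qy; field; rewrite p_neq0 q_neq0.
Qed.

Lemma rotations_cancel v c s c' s' : s != 0 -> s' != 0 ->
  s^-1 *: (c *: v + s *: perp v) + s'^-1 *: (c' *: v - s' *: perp v)
  = (c / s + c' / s') *: v.
Proof.
move=> s_neq0 s'_neq0; apply: rv2P;
  rewrite !(vxD, vyD, vxN, vyN, vxZ, vyZ, vx_perp, vy_perp);
  by field; rewrite s_neq0 s'_neq0.
Qed.

End PlaneVectors.

Section WheelGraph.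
Variable N : nat.
Hypothesis N_gt2 : (2 < N)%N.

Lemma wheel_stress_sym (R : realType) U0 U (alpha : 'I_N -> R) a b :
  wheel_stress U0 U alpha a b = wheel_stress U0 U alpha b a.
Proof.
case: a b => [i|] [j|] //=.
case: (eqVneq j (ordS i)) => [j_succ|_];
  case: (eqVneq i (ordS j)) => [i_succ|_] //.
by move: (ordSS_neq i N_gt2); rewrite -j_succ -i_succ eqxx.
Qed.

Lemma wheel_stress_succ (R : realType) U0 U (alpha : 'I_N -> R) i :
  wheel_stress U0 U alpha (Some i) (Some (ordS i)) = sigma_rim U0 U alpha i.
Proof. by rewrite /= eqxx. Qed.

Lemma wheel_stress_pred (R : realType) U0 U (alpha : 'I_N -> R) i :
  wheel_stress U0 U alpha (Some i) (Some (ord_pred i))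
  = sigma_rim U0 U alpha (ord_pred i).
Proof. by rewrite /= (negbTE (ord_pred_neq_ordS i N_gt2)) ord_predK eqxx. Qed.

Lemma wheel_spoke_neighbours (V : nmodType) i (F : option 'I_N -> V) :
  \sum_(m | wheel_edge (Some i) m) F m
  = F None + F (Some (ordS i)) + F (Some (ord_pred i)).
Proof.
have pred_neq_succ := ord_pred_neq_ordS i N_gt2.
rewrite (bigD1 None) //= (bigD1 (Some (ordS i))) /=; last by rewrite eqxx.
rewrite (bigD1 (Some (ord_pred i))) /=; last first.
  by rewrite ord_predK eqxx orbT; apply/eqP => -[] /eqP; apply/negP.
rewrite big1 ?addr0 ?addrA // => -[j|] //=.
rewrite andbT; case: (eqVneq j (ordS i)) => [->|_]; first by rewrite eqxx andbF.
by case: (eqVneq i (ordS j)) => [->|] //=; rewrite ordSK eqxx andbF.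
Qed.

Lemma wheel_hub_neighbours (V : nmodType) (F : option 'I_N -> V) :
  \sum_(m | wheel_edge None m) F m = \sum_(i < N) F (Some i).
Proof.
exact: (@big_Some _ _ (Ordinal (ltnW (ltnW N_gt2))) (wheel_edge None)).
Qed.

End WheelGraph.

Section Wheel.
Context {R : realType} {N : nat} {U0 : 'rV[R]_2} {U : 'I_N -> 'rV[R]_2}.
Context {alpha : 'I_N -> R}.
Hypothesis N_gt2 : (2 < N)%N.
Hypothesis U_neq0 : forall i, U i != U0.
Hypothesis alpha_range : forall i, 0 < alpha i < pi.
Hypothesis cos_alpha : forall i,
  cos (alpha i) * (spokeL U0 U i * spokeL U0 U (ordS i))
  = dot (U i - U0) (U (ordS i) - U0).
Hypothesis sin_alpha : forall i,
  sin (alpha i) * (spokeL U0 U i * spokeL U0 U (ordS i))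
  = cross (U i - U0) (U (ordS i) - U0).

Local Notation L := (spokeL U0 U).
Local Notation e i := (unitdir (U i) U0).

Lemma spokeL_neq0 i : L i != 0.
Proof. by rewrite gt_eqF // vnorm_gt0 // subr_eq0. Qed.

Lemma sin_alpha_neq0 i : sin (alpha i) != 0.
Proof. by rewrite gt_eqF // sin_gt0_pi. Qed.

Lemma unitdir_succ i :
  e (ordS i) = cos (alpha i) *: e i + sin (alpha i) *: perp (e i).
Proof.
exact: unitdir_rotate (U_neq0 i) (U_neq0 (ordS i)) (cos_alpha i) (sin_alpha i).
Qed.

Lemma unitdir_pred i :
  e (ord_pred i)
  = cos (alpha (ord_pred i)) *: e i - sin (alpha (ord_pred i)) *: perp (e i).
Proof.
have := cos_alpha (ord_pred i); have := sin_alpha (ord_pred i).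
rewrite ord_predK => sin_pred cos_pred.
rewrite -scaleNr; apply: unitdir_rotate => //.
- by rewrite dotC -cos_pred [X in _ * X = _]mulrC.
- by rewrite crossC -sin_pred mulNr [X in - (_ * X) = _]mulrC.
Qed.

Definition turn i : 'rV[R]_2 :=
  csc (alpha i) *: e (ordS i) + csc (alpha (ord_pred i)) *: e (ord_pred i)
  - (cot (alpha i) + cot (alpha (ord_pred i))) *: e i.

Lemma turn_eq0 i : turn i = 0.
Proof.
rewrite /turn unitdir_succ unitdir_pred.
by rewrite rotations_cancel ?sin_alpha_neq0 ?subrr.
Qed.

Lemma rim_force a j k :
  (- a * vnorm (U k - U j) / (L j * L k)) *: unitdir (U j) (U k)
  = (a / L j) *: e k - (a / L k) *: e j.
Proof.
have [Lj_neq0 Lk_neq0] := (spokeL_neq0 j, spokeL_neq0 k).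
rewrite -vnormN opprB mulrAC -[LHS]scalerA vnormZ_unitdir.
have -> : U j - U k = L j *: e j - L k *: e k.
  by rewrite !vnormZ_unitdir opprB addrA subrK.
rewrite scalerBr [_ *: (L j *: _)]scalerA [_ *: (L k *: _)]scalerA.
rewrite (_ : - a / (L j * L k) * L j = - (a / L k)); last first.
  by field; rewrite Lj_neq0 Lk_neq0.
rewrite (_ : - a / (L j * L k) * L k = - (a / L j)); last first.
  by field; rewrite Lj_neq0 Lk_neq0.
by rewrite !scaleNr opprK addrC.
Qed.

Lemma spoke_vertex_balance i :
  sigma_spoke U0 U alpha i *: e i
  + sigma_rim U0 U alpha i *: unitdir (U i) (U (ordS i))
  + sigma_rim U0 U alpha (ord_pred i) *: unitdir (U i) (U (ord_pred i)) = 0.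
Proof.
rewrite /sigma_rim /rimL ord_predK -[U i - U (ord_pred i)]opprB vnormN.
rewrite [L (ord_pred i) * _]mulrC !rim_force.
transitivity ((L i)^-1 *: turn i); last by rewrite turn_eq0 scaler0.
rewrite /sigma_spoke /turn; move: (e i) (e (ordS i)) (e (ord_pred i)) => v vS vP.
by apply: rv2P; rewrite !(vxD, vyD, vxN, vyN, vxZ, vyZ); ring.
Qed.

Lemma hub_balance : \sum_(i < N) sigma_spoke U0 U alpha i *: unitdir U0 (U i) = 0.
Proof.
under eq_bigr do rewrite unitdirC scalerN /sigma_spoke scalerBl scalerDl.
rewrite sumrN sumrB big_split /=.
rewrite [X in X + _ - _](reindex_inj (@ord_pred_inj N)).
rewrite [X in _ + X - _](reindex_inj (@ordS_inj N)) /=.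
rewrite -big_split -sumrB big1 ?oppr0 // => i _; rewrite ordSK ord_predK.
transitivity ((L i)^-1 *: turn i); last by rewrite turn_eq0 scaler0.
rewrite /turn; move: (e i) (e (ordS i)) (e (ord_pred i)) => v vS vP.
by apply: rv2P; rewrite !(vxD, vyD, vxN, vyN, vxZ, vyZ); ring.
Qed.

Lemma wheel_force_balance (n : option 'I_N) :
  \sum_(m | wheel_edge n m)
     wheel_stress U0 U alpha n m *: unitdir (wheel_pos U0 U n) (wheel_pos U0 U m)
  = 0.
Proof.
case: n => [i|].
- rewrite wheel_spoke_neighbours // wheel_stress_succ wheel_stress_pred //.
  exact: spoke_vertex_balance.
- rewrite wheel_hub_neighbours //.
  exact: hub_balance.
Qed.

End Wheel.

Theorem mainTheorem1 (R : realType) (N : nat) (HN : (3 <= N)%N)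
    (U0 : 'rV[R]_2) (U : 'I_N -> 'rV[R]_2) (alpha : 'I_N -> R) :
  (forall i, U i != U0) ->
  (forall i, 0 < alpha i < pi) ->
  (* alpha i is the counterclockwise angle at U0 from spoke i to spoke i+1 *)
  (forall i, cos (alpha i) * (spokeL U0 U i * spokeL U0 U (ordS i))
               = dot (U i - U0) (U (ordS i) - U0)) ->
  (forall i, sin (alpha i) * (spokeL U0 U i * spokeL U0 U (ordS i))
               = cross (U i - U0) (U (ordS i) - U0)) ->
  \sum_(i < N) alpha i = 2 * pi ->
  is_self_stress (wheel_pos U0 U) (@wheel_edge N) (wheel_stress U0 U alpha).
Proof.
move=> U_neq0 alpha_range cos_alpha sin_alpha _.
split=> [n m _|n]; first exact: wheel_stress_sym.
exact: wheel_force_balance.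
Qed.
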